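(* Let $n$ be a positive integer and $P\subseteq S_n$ a nonempty set of permutations. If $|P|\le n/2$ then $\mathrm{cr}(P)=n$. Moreover, there exists $P\subseteq S_n$ with $|P|=\lfloor n/2\rfloor+1$ and $\mathrm{cr}(P)<n$.
   Context: $S_n$ is the symmetric group on $\{1,\dots,n\}$, viewed as a metric space with the Hamming distance: the distance between $g,h\in S_n$ is the number of points $i$ with $g(i)\ne h(i)$. The covering radius $\mathrm{cr}(P)$ of a nonempty set $P\subseteq S_n$ is the smallest integer $r$ such that every permutation in $S_n$ is at distance at most $r$ from some element of $P$. *)

From mathcomp Require Import all_boot all_fingroup.
Set Implicit Arguments. Unset Strict Implicit. Unset Printing Implicit Defensive.

Definition hdist (n : nat) (g h : 'S_n) : nat := #|[pred i : 'I_n | g i != h i]|.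

Definition covers (n : nat) (P : {set 'S_n}) (r : nat) : Prop :=
  forall g : 'S_n, exists2 h, h \in P & hdist g h <= r.

Definition is_cr (n : nat) (P : {set 'S_n}) (r : nat) : Prop :=
  covers P r /\ forall r', covers P r' -> r <= r'.

From mathcomp Require Import all_boot all_fingroup.
From mathcomp Require Import zify.
Set Implicit Arguments. Unset Strict Implicit. Unset Printing Implicit Defensive.

(* First half: if 2|P| <= n there is a permutation g "avoiding" P, i.e.
   g i <> h i for all h in P and all points i, so g is at distance n from
   every element of P.  Such a g is obtained from a permutation with the
   fewest coincidences with P: a coincidence at i can always be removed by
   swapping i with a point j chosen outside two sets of size <= |P| each
   (which miss some point since they share i and 2|P| <= n); the swap
   creates no new coincidence.  Since distances are at most n, cr(P) = n.

   Second half: with k = n/2 + 1 >= (n+1)/2, take the k rotations of the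
   block B = {0, ..., k-1}.  Since 2|B| > n every permutation g maps some
   point of B into B (pigeonhole), and some rotation agrees with g there,
   so P covers S_n with radius n - 1; hence cr(P) exists and is < n. *)

Lemma hdist_le n (g h : 'S_n) : hdist g h <= n.
Proof. by rewrite -[n in _ <= n]card_ord max_card. Qed.

Lemma hdist_agree n (g h : 'S_n) (i : 'I_n) : g i = h i -> hdist g h <= n.-1.
Proof.
move=> gh_i; rewrite -ltnS (ltn_predK (ltn_ord i)) -[n in _ < n]card_ord.
by apply/proper_card/properP; split; [exact: subset_predT | exists i; rewrite // !inE gh_i eqxx].
Qed.

Lemma hdist_avoid n (g h : 'S_n) : (forall i, g i != h i) -> hdist g h = n.
Proof. by move=> gh; rewrite -[RHS]card_ord; apply: eq_card => i; rewrite inE gh. Qed.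

(* Covering is a decidable property, which gives a least covering radius. *)
Definition coversb n (P : {set 'S_n}) (r : nat) : bool :=
  [forall g, [exists h in P, hdist g h <= r]].

Lemma coversP n (P : {set 'S_n}) r : reflect (covers P r) (coversb P r).
Proof.
apply: (iffP forallP) => [cov g | cov g].
  by case/exists_inP: (cov g) => h; exists h.
by case: (cov g) => h hP d_gh; apply/exists_inP; exists h.
Qed.

Lemma exists_cr n (P : {set 'S_n}) r : covers P r -> exists2 r', is_cr P r' & r' <= r.
Proof.
move=> /coversP cov_r; have ex_r : exists r, coversb P r by exists r.
case: (ex_minnP ex_r) => r' /coversP cov_r' min_r'.
by exists r'; [split=> // r'' /coversP; exact: min_r' | exact: min_r'].
Qed.

Section AvoidingPermutation.

Variables (n : nat) (P : {set 'S_n}).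
Hypothesis small_P : (#|P|).*2 <= n.

Definition coincidences (g : 'S_n) : {set 'I_n} :=
  [set i | [exists h in P, g i == h i]].

Lemma exists_swap_partner (g : 'S_n) (i : 'I_n) : i \in coincidences g ->
  exists j, (forall h, h \in P -> g j != h i) /\ (forall h, h \in P -> h j != g i).
Proof.
rewrite inE => /exists_inP [h0 h0P /eqP gh0_i].
pose A := [set (g^-1)%g (h i) | h : 'S_n in P].
pose B := [set (h^-1)%g (g i) | h : 'S_n in P].
have iAB : i \in A :&: B.
  rewrite inE; apply/andP; split; apply/imsetP; exists h0 => //.
    by rewrite -gh0_i permK.
  by rewrite gh0_i permK.
have small_AB : #|A :|: B| < n.
  have cardA : #|A| <= #|P| by apply: leq_imset_card.
  have cardB : #|B| <= #|P| by apply: leq_imset_card.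
  have cardAB : 0 < #|A :&: B| by apply/card_gt0P; exists i.
  move: small_P (cardsUI A B); rewrite -addnn; lia.
have [j _] : exists2 j, j \in [set: 'I_n] & j \notin A :|: B.
  apply/subsetPn; apply: contraL small_AB => /subset_leq_card.
  by rewrite cardsT card_ord -leqNgt.
rewrite inE negb_or => /andP [jA jB]; exists j; split=> h hP.
  by apply: contra jA => /eqP gj; apply/imsetP; exists h; rewrite // -gj permK.
by apply: contra jB => /eqP hj; apply/imsetP; exists h; rewrite // -hj permK.
Qed.

Lemma swap_coincidences (g : 'S_n) (i j : 'I_n) :
  (forall h, h \in P -> g j != h i) -> (forall h, h \in P -> h j != g i) ->
  coincidences (tperm i j * g) \subset coincidences g :\ i.
Proof.
move=> gj_free gi_free; apply/subsetP => x; rewrite !inE permM.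
case/exists_inP => h hP /eqP gh_x.
have [xi | xi] := eqVneq x i.
  by move: xi gh_x => -> /eqP; rewrite tpermL (negbTE (gj_free h hP)).
have [xj | xj] := eqVneq x j.
  by move: xj gh_x => -> /eqP; rewrite tpermR eq_sym (negbTE (gi_free h hP)).
by apply/exists_inP; exists h; rewrite // -gh_x tpermD // eq_sym.
Qed.

Lemma exists_avoiding_perm : exists g : 'S_n, forall h, h \in P -> forall i, g i != h i.
Proof.
have [g _ g_min] := @arg_minnP _ 1%g xpredT (fun g : 'S_n => #|coincidences g|) isT.
exists g => h hP i; apply/negP => /eqP gh_i.
have i_coin : i \in coincidences g by rewrite inE; apply/exists_inP; exists h; rewrite ?gh_i.
have [j [gj_free gi_free]] := exists_swap_partner i_coin.
have := subset_leq_card (swap_coincidences gj_free gi_free).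
by move/(leq_trans (g_min _ isT)); rewrite (cardsD1 i (coincidences g)) i_coin add1n ltnn.
Qed.

End AvoidingPermutation.

Lemma perm_meets_set n (S : {set 'I_n}) (g : 'S_n) :
  n < (#|S|).*2 -> exists2 i, i \in S & g i \in S.
Proof.
move=> big_S; apply/exists_inP; apply: contraLR big_S => /exists_inPn out_S.
have : g @: S \subset ~: S by apply/subsetP => _ /imsetP [i iS ->]; rewrite inE out_S.
move/subset_leq_card; rewrite card_imset; last exact: perm_inj.
by rewrite cardsCs card_ord -leqNgt -addnn; lia.
Qed.

Lemma covers_of_transitive n (S : {set 'I_n}) (Q : {set 'S_n}) :
  n < (#|S|).*2 -> {in S &, forall i j, exists2 h, h \in Q & h i = j} ->
  covers Q n.-1.
Proof.
move=> big_S trans_Q g; have [i iS giS] := perm_meets_set g big_S.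
have [h hQ hi_gi] := trans_Q i (g i) iS giS.
by exists h => //; apply: (hdist_agree (esym hi_gi)).
Qed.

Section BlockRotations.

Variables (n k : nat).
Hypothesis k_le_n : k <= n.

Definition block : {set 'I_n} := [set widen_ord k_le_n x | x : 'I_k].

Lemma mem_block (i : 'I_n) : (i \in block) = (i < k).
Proof.
apply/imsetP/idP => [[x _ ->] | ik] /=; first exact: ltn_ord.
by exists (Ordinal ik) => //; apply: val_inj.
Qed.

Lemma card_block : #|block| = k.
Proof.
rewrite card_imset ?card_ord // => x y /(congr1 val) eq_xy; exact: val_inj.
Qed.

Definition rotate (t : 'I_k) (i : 'I_n) : 'I_n :=
  if i < k then insubd i ((i + t) %% k) else i.

Lemma rotate_val t (i : 'I_n) : i < k -> val (rotate t i) = (i + t) %% k.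
Proof.
move=> ik; have k_gt0 : 0 < k := leq_ltn_trans (leq0n i) ik.
by rewrite /rotate ik val_insubd (leq_trans (ltn_pmod _ k_gt0) k_le_n).
Qed.

Lemma rotate_out t (i : 'I_n) : k <= i -> rotate t i = i.
Proof. by rewrite /rotate leqNgt => /negbTE ->. Qed.

Lemma rotate_inj t : injective (rotate t).
Proof.
have k_gt0 : 0 < k := leq_ltn_trans (leq0n t) (ltn_ord t).
move=> i j; case: (ltnP i k) => ik; case: (ltnP j k) => jk.
- move=> /(congr1 val); rewrite !rotate_val // => /eqP.
  by rewrite eqn_modDr !modn_small // => /eqP /val_inj.
- by rewrite (rotate_out t jk) => ij; move: jk; rewrite -ij rotate_val // leqNgt (ltn_pmod _ k_gt0).
- by rewrite (rotate_out t ik) => ij; move: ik; rewrite ij rotate_val // leqNgt (ltn_pmod _ k_gt0).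
- by rewrite (rotate_out t ik) (rotate_out t jk).
Qed.

Definition rotation (t : 'I_k) : 'S_n := perm (@rotate_inj t).

Definition rotations : {set 'S_n} := [set rotation t | t : 'I_k].

(* Distinct rotations move the first point to distinct places. *)
Lemma card_rotations : #|rotations| = k.
Proof.
rewrite card_imset ?card_ord // => t u.
have k_gt0 : 0 < k by apply: leq_ltn_trans (ltn_ord t).
pose i0 : 'I_n := Ordinal (leq_trans k_gt0 k_le_n).
move=> /(congr1 (fun p : 'S_n => val (p i0))).
by rewrite !permE !rotate_val // !add0n !modn_small // => /val_inj.
Qed.

Lemma rotations_transitive :
  {in block &, forall i j, exists2 h, h \in rotations & h i = j}.
Proof.
move=> i j; rewrite !mem_block => ik jk.
have k_gt0 : 0 < k by apply: leq_ltn_trans ik.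
pose t : 'I_k := Ordinal (ltn_pmod (j + k - i) k_gt0).
exists (rotation t); first exact: imset_f.
apply: val_inj; rewrite permE rotate_val //= modnDmr addnBA; last exact: leq_trans (ltnW ik) (leq_addl j k).
by rewrite addKn modnDr modn_small.
Qed.

End BlockRotations.

Theorem theorem6p1 (n : nat) (hn : 0 < n) :
  (forall P : {set 'S_n}, P != set0 -> (#|P|).*2 <= n -> is_cr P n) /\
  (exists P : {set 'S_n}, #|P| = n./2 + 1 /\ exists2 r, is_cr P r & r < n).
Proof.
split=> [P /set0Pn [h0 h0P] small_P | ].
  split=> [g | r cov_r]; first by exists h0; rewrite ?hdist_le.
  have [g g_avoids] := exists_avoiding_perm small_P.
  by have [h hP] := cov_r g; rewrite (hdist_avoid (g_avoids h hP)).
have k_le_n : n./2.+1 <= n by rewrite ltn_half_double -addnn -addn1 leq_add2l.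
have big_block : n < (#|block k_le_n|).*2 by rewrite card_block -ltn_half_double.
exists (rotations k_le_n); split; first by rewrite card_rotations addn1.
have [r cr_r r_le] := exists_cr (covers_of_transitive big_block (@rotations_transitive _ _ k_le_n)).
by exists r; rewrite // (leq_ltn_trans r_le) // ltn_predL.
Qed.
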